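(* Let $u$ be a word over a finite alphabet and let $v$ be a run in $u$, with shortest period $p$ and exponent $\sigma(v)$. If $p=1$, then $\sigma(v)=|H(v)|+1$. If $p\ge 2$, then $\lceil \sigma(v)\rceil \le \frac{|H(v)|}{2}+3$.
   Context: For a word $u=u_1\cdots u_m$, the (shortest) period is the smallest positive integer $p$ with $u_i=u_{i+p}$ for all $1\le i\le m-p$; $u[i..j]=u_i\cdots u_j$. A run in $u$ is an interval $[i..j]$ such that the period $p$ of $u[i..j]$ satisfies $2p\le j-i+1$, and $u[i-1]\ne u[i+p-1]$ (or $i=1$) and $u[j-p+1]\ne u[j+1]$ (or $j=|u|$); its exponent is $\sigma(v)=(j-i+1)/p$. Words $x,y$ are cyclically equivalent if $x=st$, $y=ts$ for some words $s,t$. The inter-positions of $u$ are the $|u|-1$ positions lying between consecutive letters of $u$. Handles: for a run $v$ with period $p$, let $w$ be the prefix of (the factor) $v$ of length $p$, and let $w_{\min}$, $w_{\max}$ be the lexicographically minimal and maximal words cyclically equivalent to $w$. Then $H(v)$ is the set of inter-positions defined by: (a) if $w_{\min}=w_{\max}$, $H(v)$ consists of all inter-positions lying within $v$; (b) if $w_{\min}\ne w_{\max}$, $H(v)$ consists of the inter-positions lying between two consecutive (adjacent) occurrences of $w_{\min}$ inside $v$ and those lying between two consecutive occurrences of $w_{\max}$ inside $v$. *)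

From HB Require Import structures.
From mathcomp Require Import all_boot all_order all_algebra.
Set Implicit Arguments. Unset Strict Implicit. Unset Printing Implicit Defensive.
Import Order.TTheory GRing.Theory Num.Theory.

Section Words.
Variables (d : Order.disp_t) (T : orderType d).

(* factor u i j = u[i..j] (0-based, inclusive) *)
Definition factor (u : seq T) (i j : nat) : seq T := take (j.+1 - i) (drop i u).

Definition is_period (w : seq T) (p : nat) : bool :=
  (0 < p) && (drop p w == take (size w - p) w).

Definition period (w : seq T) : nat := (find (is_period w) (iota 1 (size w))).+1.

Definition is_run (u : seq T) (i j : nat) : bool :=
  let p := period (factor u i j) in
  [&& i <= j, j < size u, 2 * p <= j.+1 - i,
      (i == 0) || (onth u i.-1 != onth u (i + p).-1)
    & (j.+1 == size u) || (onth u (j.+1 - p) != onth u j.+1)].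

Definition exponent (u : seq T) (i j : nat) : rat :=
  (j.+1 - i)%:R / (period (factor u i j))%:R.

Fixpoint lexle (s t : seq T) : bool :=
  match s, t with
  | [::], _ => true
  | _ :: _, [::] => false
  | x :: s', y :: t' => (x < y)%O || ((x == y) && lexle s' t')
  end.

Definition conjugates (w : seq T) : seq (seq T) := [seq rot k w | k <- iota 0 (size w)].

Definition cyc_min (w : seq T) : seq T :=
  foldr (fun x m => if lexle x m then x else m) w (conjugates w).
Definition cyc_max (w : seq T) : seq T :=
  foldr (fun x m => if lexle m x then x else m) w (conjugates w).

(* Inter-positions of u: k : 'I_(size u).-1 is the inter-position between
   letters k and k+1 (0-based). *)
Definition handles (u : seq T) (i j : nat) : {set 'I_(size u).-1} :=
  let v := factor u i j in
  let p := period v in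
  let w := take p v in
  let wmin := cyc_min w in
  let wmax := cyc_max w in
  if wmin == wmax then [set k : 'I_(size u).-1 | (i <= k) && (k < j)]
  else [set k : 'I_(size u).-1 |
          [exists s : 'I_(size u),
             [&& i <= s, s + 2 * p <= j.+1, k == s + p - 1 :> nat &
              ((factor u s (s + p - 1) == wmin) && (factor u (s + p) (s + 2 * p - 1) == wmin))
              || ((factor u s (s + p - 1) == wmax) && (factor u (s + p) (s + 2 * p - 1) == wmax))]]].

End Words.

From mathcomp Require Import all_boot all_order all_algebra.
From mathcomp Require Import zify lra.
Import Order.TTheory GRing.Theory Num.Theory.
Set Implicit Arguments. Unset Strict Implicit. Unset Printing Implicit Defensive.

(* Let m = j - i + 1 be the length of the run and w its root of length p.  If
   all conjugates of w coincide (always so when p = 1), every inter-position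
   inside the run is a handle, which gives the exact count for p = 1.
   Otherwise w_min and w_max are the rotations of w by distinct k1, k2 < p.
   By periodicity, a square of rot k w starts at every offset k + t p of the
   run with k + (t + 2) p <= m, in particular for all t < m %/ p - 2, and its
   centre is a handle; these 2 (m %/ p - 2) centres are pairwise distinct.
   Hence ceil (m / p) <= m %/ p + 1 <= |H| / 2 + 3. *)

Lemma nth_rot_mod (T : Type) (x0 : T) (w : seq T) k n :
  k < size w -> n < size w ->
  nth x0 (rot k w) n = nth x0 w ((n + k) %% size w).
Proof.
move=> lt_kw lt_nw; rewrite /rot nth_cat size_drop.
case: ltnP => [lt_n_drop | le_drop_n].
  by rewrite nth_drop modn_small; [congr nth; lia | lia].
rewrite nth_take; last lia.
have -> : n + k = (n - (size w - k)) + size w by lia.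
by rewrite modnDr modn_small //; lia.
Qed.

Lemma mem_foldr_select (T : eqType) (f : T -> T -> T) (x0 : T) (s : seq T) :
  (forall x y, f x y = x \/ f x y = y) -> foldr f x0 s \in x0 :: s.
Proof.
move=> f_sel; elim: s => [|x s IH] /=; first by rewrite inE.
case: (f_sel x (foldr f x0 s)) => ->; first by rewrite !inE eqxx orbT.
by move: IH; rewrite !inE => /orP [->|->]; rewrite ?orbT.
Qed.

Lemma card_ord_range N a b : b <= N -> #|[set k : 'I_N | a <= k < b]| = b - a.
Proof.
move=> le_bN; rewrite -[b - a](size_iota a) -(size_image val).
apply/eqP; rewrite eqn_leq !uniq_leq_size ?iota_uniq //.
- move=> x; rewrite mem_iota => /andP [? ?]; apply/imageP.
  have lt_xN : x < N by lia.
  by exists (Ordinal lt_xN); rewrite // inE /=; lia.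
- by rewrite /image_mem map_inj_uniq ?enum_uniq //; exact: val_inj.
- by move=> x /imageP [k]; rewrite inE mem_iota => /andP [? ?] -> /=; lia.
Qed.

Lemma addn_mulnI p k k' t t' : k < p -> k' < p ->
  k + t * p = k' + t' * p -> (k, t) = (k', t').
Proof.
move=> lt_kp lt_k'p E; have := congr1 (modn^~ p) E.
rewrite /= ![_ + _ * p]addnC !modnMDl !modn_small // => Ek; congr pair => //.
by move: E; rewrite Ek => /addnI /eqP; rewrite eqn_pmul2r //; [move/eqP | lia].
Qed.

Section Words.
Variables (d : Order.disp_t) (T : orderType d).
Implicit Types (u w : seq T).

Lemma size_factor u i j : i <= j -> j < size u -> size (factor u i j) = j.+1 - i.
Proof. by move=> le_ij lt_ju; rewrite /factor size_take size_drop; case: ltnP => /= ?; lia. Qed.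

Lemma factor_factor u i j s t : s <= t -> i + t <= j ->
  factor (factor u i j) s t = factor u (i + s) (i + t).
Proof.
move=> le_st le_tj; rewrite /factor.
rewrite -[j.+1 - i](subnK (_ : s <= j.+1 - i)); last lia.
rewrite -take_drop take_takel ?drop_drop; last lia.
by congr (take _ (drop _ _)); lia.
Qed.

Lemma period_gt0 w : 0 < period w.
Proof. by []. Qed.

Lemma period_spec w : 0 < size w -> is_period w (period w) /\ period w <= size w.
Proof.
move=> w_gt0.
have has_period : has (is_period w) (iota 1 (size w)).
  apply/hasP; exists (size w); first by rewrite mem_iota; lia.
  by rewrite /is_period w_gt0 drop_size subnn take0.
have := nth_find 0 has_period.
have : find (is_period w) (iota 1 (size w)) < size w.
  by rewrite -[X in _ < X](size_iota 1) -has_find.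
by move=> lt_find; rewrite nth_iota // add1n.
Qed.

Lemma nth_period x0 w p : is_period w p ->
  forall x, x < size w -> nth x0 w x = nth x0 w (x %% p).
Proof.
case/andP => p_gt0 /eqP Edrop.
have shift n : p + n < size w -> nth x0 w (p + n) = nth x0 w n.
  move=> lt_pnw; have := congr1 (nth x0 ^~ n) Edrop.
  by rewrite /= nth_drop nth_take //; lia.
elim/ltn_ind => x IH lt_xw; case: (ltnP x p) => [lt_xp | le_px].
  by rewrite modn_small.
have -> : x %% p = (x - p) %% p by rewrite -{1}(subnKC le_px) modnDl.
rewrite -[in LHS](subnKC le_px) shift ?subnKC // IH //; lia.
Qed.

Lemma factor_period_rot w p s : is_period w p -> p <= size w -> s + p <= size w ->
  factor w s (s + p - 1) = rot (s %% p) (take p w).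
Proof.
move=> w_p le_pw le_spw.
have p_gt0 : 0 < p by case/andP: w_p.
have x0 : T.
  have : 0 < size w by lia.
  by case: (w) => [|a l _].
have size_wp : size (take p w) = p by rewrite size_take; case: ltnP; lia.
apply: (@eq_from_nth _ x0) => [|n].
  by rewrite size_rot size_wp size_factor; lia.
rewrite size_factor; [move=> lt_np | lia | lia].
rewrite /factor nth_take; last lia.
rewrite nth_drop nth_rot_mod size_wp ?ltn_pmod //; last lia.
by rewrite nth_take ?ltn_pmod // (nth_period x0 w_p) ?modnDmr 1?addnC //; lia.
Qed.

Lemma mem_conjugates w k : k < size w -> rot k w \in conjugates w.
Proof. by move=> lt_kw; apply: map_f; rewrite mem_iota. Qed.

Lemma cyc_min_conjugate w : 0 < size w -> cyc_min w \in conjugates w.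
Proof.
move=> w_gt0; have /predU1P [->|//] : cyc_min w \in w :: conjugates w.
  by apply: mem_foldr_select => x y; case: ifP; [left | right].
by rewrite -{1}(rot0 w) mem_conjugates.
Qed.

Lemma cyc_max_conjugate w : 0 < size w -> cyc_max w \in conjugates w.
Proof.
move=> w_gt0; have /predU1P [->|//] : cyc_max w \in w :: conjugates w.
  by apply: mem_foldr_select => x y; case: ifP; [left | right].
by rewrite -{1}(rot0 w) mem_conjugates.
Qed.

Lemma cyc_min_seq1 (x : T) : cyc_min [:: x] = [:: x].
Proof. by rewrite /cyc_min /= /lexle ltxx eqxx. Qed.

Lemma cyc_max_seq1 (x : T) : cyc_max [:: x] = [:: x].
Proof. by rewrite /cyc_max /= /lexle ltxx eqxx. Qed.

Section Run.
Variables (u : seq T) (i j : nat).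
Hypotheses (le_ij : i <= j) (lt_ju : j < size u).

Local Notation v := (factor u i j).
Local Notation p := (period (factor u i j)).
Local Notation w := (take (period (factor u i j)) (factor u i j)).

Lemma size_run_factor : size v = j.+1 - i.
Proof. exact: size_factor. Qed.

Lemma period_run_spec : is_period v p /\ p <= j.+1 - i.
Proof. by rewrite -size_run_factor; apply: period_spec; rewrite size_run_factor; lia. Qed.

Lemma size_run_root : size w = p.
Proof. by rewrite size_takel // size_run_factor; case: period_run_spec. Qed.

Lemma factor_run_rot s : s + p <= j.+1 - i ->
  factor u (i + s) (i + s + p - 1) = rot (s %% p) w.
Proof.
move=> le_spm; have [v_p le_pm] := period_run_spec.
have p_gt0 := period_gt0 v.
rewrite -addnBA // -addnA -(factor_factor _ (j := j)); [|lia|lia].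
by rewrite addnBA // factor_period_rot // size_run_factor.
Qed.

Lemma card_handles_uniform : cyc_min w = cyc_max w -> #|handles u i j| = j - i.
Proof. by rewrite /handles => ->; rewrite eqxx card_ord_range //; lia. Qed.

Lemma handle_of_square s : cyc_min w != cyc_max w ->
  s + 2 * p <= j.+1 - i -> rot (s %% p) w \in [:: cyc_min w; cyc_max w] ->
  i + s + p - 1 \in [seq val k | k in handles u i j].
Proof.
move=> nonuniform le_s2pm w_s; have p_gt0 := period_gt0 v.
have lt_hu : i + s + p - 1 < (size u).-1 by lia.
have lt_su : i + s < size u by lia.
apply/imageP; exists (Ordinal lt_hu) => //.
rewrite /handles (negbTE nonuniform) inE; apply/existsP; exists (Ordinal lt_su) => /=.
have -> : i + s + 2 * p - 1 = i + (s + p) + p - 1 by lia.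
have le_end : i + s + 2 * p <= j.+1 by lia.
rewrite leq_addr le_end eqxx factor_run_rot -?[i + s + p]addnA ?factor_run_rot ?modnDr; [|lia|lia].
by move: w_s; rewrite !inE => /orP [] /eqP ->; rewrite eqxx ?orbT.
Qed.

Lemma card_handles_nonuniform : cyc_min w != cyc_max w ->
  2 * ((j.+1 - i) %/ p - 2) <= #|handles u i j|.
Proof.
move=> nonuniform; set q := (j.+1 - i) %/ p.
have p_gt0 := period_gt0 v.
have le_qpm : q * p <= j.+1 - i by apply: leq_divM.
have w_gt0 : 0 < size w by rewrite size_run_root.
have /mapP [k1 + min_k1] := cyc_min_conjugate w_gt0.
have /mapP [k2 + max_k2] := cyc_max_conjugate w_gt0.
rewrite !mem_iota size_run_root => /andP [_ lt_k2p] /andP [_ lt_k1p].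
have ne_k12 : k1 != k2.
  by apply: contraNneq nonuniform => eq_k12; rewrite min_k1 max_k2 eq_k12.
have lt_p : {in [:: k1; k2], forall k, k < p} by move=> k; rewrite !inE => /pred2P [] ->.
pose offsets := [seq k + t * p | k <- [:: k1; k2], t <- iota 0 (q - 2)].
have -> : 2 * (q - 2) = size [seq i + s + p - 1 | s <- offsets].
  by rewrite size_map size_allpairs size_iota.
rewrite -(size_image val); apply: uniq_leq_size.
  rewrite map_inj_uniq => [|x y /=]; last lia.
  apply: allpairs_uniq => [|| [k t] [k' t']]; first by rewrite /= inE andbT.
    exact: iota_uniq.
  move=> /allpairsP [[? ?] [k_in _ [-> ->]]] /allpairsP [[? ?] [k'_in _ [-> ->]]].
  by apply: addn_mulnI; [exact: lt_p k_in | exact: lt_p k'_in].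
move=> _ /mapP [_ /allpairsP [[k t] [/= k_in t_in ->]] ->].
apply: handle_of_square => //; have lt_kp := lt_p _ k_in.
  have : (t + 3) * p <= q * p by rewrite leq_mul2r; move: t_in; rewrite mem_iota; lia.
  by lia.
rewrite addnC modnMDl modn_small //.
by move: k_in; rewrite !inE => /pred2P [] ->; rewrite -?min_k1 -?max_k2 eqxx ?orbT.
Qed.

End Run.

End Words.

Section RunBounds.
Variables (d : Order.disp_t) (T : orderType d) (u : seq T) (i j : nat).
Hypothesis run : is_run u i j.

Local Notation p := (period (factor u i j)).

Lemma card_handles_period1 : p = 1 -> #|handles u i j| = j - i.
Proof.
case/and5P: run => le_ij lt_ju _ _ _ p1; apply: card_handles_uniform => //.
have : 0 < size (factor u i j) by rewrite size_factor //; lia.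
by rewrite p1; case: (factor u i j) => // x v' _; rewrite /= take0 cyc_min_seq1 cyc_max_seq1.
Qed.

Lemma card_handles_lower : 2 <= p -> 2 * ((j.+1 - i) %/ p) <= #|handles u i j| + 4.
Proof.
case/and5P: run => le_ij lt_ju _ _ _ p_ge2.
have le_qpm := leq_divM (j.+1 - i) p.
have [uniform | nonuniform] := eqVneq (cyc_min (take p (factor u i j)))
                                       (cyc_max (take p (factor u i j))).
  by rewrite card_handles_uniform //; nia.
by have := card_handles_nonuniform le_ij lt_ju nonuniform; lia.
Qed.

End RunBounds.

Local Open Scope ring_scope.

Lemma ceil_ratio_le (R : archiRealFieldType) (m n : nat) : (0 < n)%N ->
  Num.ceil (m%:R / n%:R : R) <= (m %/ n)%N.+1%:R.
Proof.
move=> n_gt0; rewrite ceil_le_int mulrz_nat ler_pdivrMr ?ltr0n // -natrM ler_nat.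
by rewrite mulSn {1}(divn_eq m n) addnC leq_add2r ltnW // ltn_pmod.
Qed.

Theorem lemma1 (d : Order.disp_t) (T : finOrderType d) (u : seq T) (i j : nat) :
  is_run u i j ->
  (period (factor u i j) = 1%N ->
     exponent u i j = (#|handles u i j|)%:R + 1) /\
  ((2 <= period (factor u i j))%N ->
     (Num.ceil (exponent u i j))%:~R <= (#|handles u i j|)%:R / 2 + 3 :> rat).
Proof.
move=> run; have /and5P [le_ij _ _ _ _] := run.
split => [p1 | p_ge2].
  by rewrite /exponent p1 card_handles_period1 // divr1 subSn // -natr1.
have := card_handles_lower run p_ge2; set q := (_ %/ _)%N; set c := #|_| => le_qc.
apply: (@le_trans _ _ (q.+1)%:R).
  by rewrite -mulrz_nat ler_int ceil_ratio_le //; lia.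
have : (2 * q)%:R <= (c + 4)%:R :> rat by rewrite ler_nat.
by rewrite natrM natrD -[q.+1%:R]natr1; lra.
Qed.
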